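(* Let $(J,\mathcal F)$ and $w^S_j>0$ be as in the context, let $\mathbf c$ be $\mathcal F$-admissible, and let $\mathrm{AG}_2$ on input $\mathbf c$ produce $\boldsymbol\pi$, $\boldsymbol\nu$, sets $S_k$ and quantities $\nu^{S_k}_j$ ($j\in S_k$). Then for every $1\le m\le n$, $$\nu_{\pi_m}=\min\{\nu^{S_m}_j:j\in S_m\}.$$
   Context: $J$ finite, $|J|=n$; $\mathcal F\subseteq2^J$ with $\emptyset\in\mathcal F$, each nonempty $S\in\mathcal F$ having nonempty $\partial^-S=\{j\in S:S\setminus\{j\}\in\mathcal F\}$, each $S\in\mathcal F\ne J$ having $j\notin S$ with $S\cup\{j\}\in\mathcal F$. Coefficients $w^S_j>0$ for $j\in S\in\mathcal F$. $\mathrm{AG}_2$ on input $\mathbf c$: $S_1=J$, $\nu^{S_1}_j=c_j/w^{S_1}_j$ ($j\in J$), $\pi_1\in\arg\min\{\nu^{S_1}_j:j\in\partial^-S_1\}$, $\nu_{\pi_1}=\nu^{S_1}_{\pi_1}$; for $k=2..n$: $S_k=S_{k-1}\setminus\{\pi_{k-1}\}$, $\nu^{S_k}_j=\nu^{S_{k-1}}_j+(w^{S_{k-1}}_j/w^{S_k}_j-1)[\nu^{S_{k-1}}_j-\nu^{S_{k-1}}_{\pi_{k-1}}]$ ($j\in S_k$), $\pi_k\in\arg\min\{\nu^{S_k}_j:j\in\partial^-S_k\}$, $\nu_{\pi_k}=\nu^{S_k}_{\pi_k}$. $\mathbf c$ is $\mathcal F$-admissible if the output satisfies $\nu_{\pi_1}\le\cdots\le\nu_{\pi_n}$.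 *)

From HB Require Import structures.
From mathcomp Require Import all_boot all_order all_algebra.
Set Implicit Arguments. Unset Strict Implicit. Unset Printing Implicit Defensive.
Import Order.TTheory GRing.Theory Num.Theory.
Local Open Scope ring_scope.

Section AG2.
Variables (R : realFieldType) (J : finType).

Definition lower_boundary (F : {set {set J}}) (S : {set J}) : {set J} :=
  [set j in S | S :\ j \in F].

Definition set_system_ok (F : {set {set J}}) : Prop :=
  [/\ set0 \in F,
      (forall S, S \in F -> S != set0 -> lower_boundary F S != set0) &
      (forall S, S \in F -> S != [set: J] ->
         exists2 j, j \notin S & S :|: [set j] \in F)].

Definition weights_pos (F : {set {set J}}) (w : {set J} -> J -> R) : Prop :=
  forall S j, S \in F -> j \in S -> 0 < w S j.

(* Given the sequence of removed elements pi (0-indexed: pi k = pi_{k+1}),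
   the sets S k (= S_{k+1}) and the quantities nu k j (= nu^{S_{k+1}}_j). *)
Fixpoint AG2_S (pi : nat -> J) (k : nat) : {set J} :=
  match k with
  | 0 => [set: J]
  | k'.+1 => AG2_S pi k' :\ pi k'
  end.

Fixpoint AG2_nu (w : {set J} -> J -> R) (c : J -> R) (pi : nat -> J)
    (k : nat) (j : J) : R :=
  match k with
  | 0 => c j / w [set: J] j
  | k'.+1 =>
      AG2_nu w c pi k' j
      + (w (AG2_S pi k') j / w (AG2_S pi k) j - 1)
        * (AG2_nu w c pi k' j - AG2_nu w c pi k' (pi k'))
  end.

Definition AG2_run (F : {set {set J}}) (w : {set J} -> J -> R) (c : J -> R)
    (pi : nat -> J) : Prop :=
  forall k, (k < #|J|)%N ->
    pi k \in lower_boundary F (AG2_S pi k) /\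
    (forall j, j \in lower_boundary F (AG2_S pi k) ->
       AG2_nu w c pi k (pi k) <= AG2_nu w c pi k j).

Definition AG2_out (w : {set J} -> J -> R) (c : J -> R) (pi : nat -> J)
    (k : nat) : R := AG2_nu w c pi k (pi k).

Definition admissible_run (w : {set J} -> J -> R) (c : J -> R)
    (pi : nat -> J) : Prop :=
  forall k, (k.+1 < #|J|)%N -> AG2_out w c pi k <= AG2_out w c pi k.+1.

End AG2.

From HB Require Import structures.
From mathcomp Require Import all_boot all_order all_algebra.
From mathcomp Require Import zify ring.
Set Implicit Arguments. Unset Strict Implicit. Unset Printing Implicit Defensive.
Import Order.TTheory GRing.Theory Num.Theory.
Local Open Scope ring_scope.

(* The update rule gives nu^{S_{k+1}}_j - nu_{pi_k}
   = (w^{S_k}_j / w^{S_{k+1}}_j) (nu^{S_k}_j - nu_{pi_k}) with a positive factor,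
   so the comparison of nu_j with the value nu_{pi_k} just output survives the
   removal of pi_k.  If nu^{S_m}_j < nu_{pi_m} for some j in S_m, admissibility
   (nu_{pi_k} <= nu_{pi_{k+1}}) then keeps nu^{S_k}_j < nu_{pi_k} for all k >= m
   while j stays in S_k; but j is removed at some step k, where nu^{S_k}_j = nu_{pi_k}. *)

Lemma setT_in_set_system (J : finType) (F : {set {set J}}) :
  set_system_ok F -> [set: J] \in F.
Proof.
case=> F0 _ F_up.
have big_in_F k : (k <= #|J|)%N -> exists2 S, S \in F & (k <= #|S|)%N.
  elim: k => [|k IH] Hk; first by exists set0.
  have [S SF kS] := IH (ltnW Hk).
  have [ST|SnT] := eqVneq S [set: J]; first by exists S; rewrite // ST cardsT.
  have [j jS SjF] := F_up S SF SnT.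
  by exists (S :|: [set j]) => //; rewrite setUC cardsU1 jS; lia.
have [S SF nS] := big_in_F _ (leqnn _).
suff <- : S = [set: J] by [].
by apply/eqP; rewrite eqEcard subsetT cardsT.
Qed.

Lemma AG2_nuS_sub_out (R : realFieldType) (J : finType)
    (w : {set J} -> J -> R) (c : J -> R) (pi : nat -> J) k j :
  AG2_nu w c pi k.+1 j - AG2_out w c pi k =
  w (AG2_S pi k) j / w (AG2_S pi k.+1) j * (AG2_nu w c pi k j - AG2_out w c pi k).
Proof. by rewrite /= /AG2_out; ring. Qed.

Section AG2Run.
Variables (R : realFieldType) (J : finType) (F : {set {set J}}).
Variables (w : {set J} -> J -> R) (c : J -> R) (pi : nat -> J).
Hypotheses (F_ok : set_system_ok F) (w_pos : weights_pos F w).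
Hypothesis run : AG2_run F w c pi.

Local Notation nu := (AG2_nu w c pi).
Local Notation out := (AG2_out w c pi).

Lemma AG2_pi_in_S k : (k < #|J|)%N -> pi k \in AG2_S pi k.
Proof. by case/run; rewrite inE => /andP[]. Qed.

Lemma AG2_S_in_F k : (k <= #|J|)%N -> AG2_S pi k \in F.
Proof.
case: k => [|k] kn; first exact: setT_in_set_system.
by case: (run kn)=> + _; rewrite inE => /andP[].
Qed.

Lemma card_AG2_S k : (k <= #|J|)%N -> #|AG2_S pi k| = (#|J| - k)%N.
Proof.
elim: k => [|k IH] kn; first by rewrite cardsT subn0.
have := cardsD1 (pi k) (AG2_S pi k).
by rewrite AG2_pi_in_S // IH ?(ltnW kn) //=; lia.
Qed.

Lemma AG2_S_final : AG2_S pi #|J| = set0.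
Proof. by apply/eqP; rewrite -cards_eq0 card_AG2_S // subnn. Qed.

Lemma AG2_out_le_nuS k j : (k < #|J|)%N -> j \in AG2_S pi k.+1 ->
  (out k <= nu k.+1 j) = (out k <= nu k j).
Proof.
move=> kn jS1; have jS : j \in AG2_S pi k by move: jS1; rewrite inE => /andP[].
have w_gt0 : 0 < w (AG2_S pi k) j / w (AG2_S pi k.+1) j.
  by rewrite divr_gt0 // w_pos // AG2_S_in_F // ltnW.
by rewrite -subr_ge0 AG2_nuS_sub_out pmulr_rge0 // subr_ge0.
Qed.

Hypothesis adm : admissible_run w c pi.

Lemma AG2_out_le_nu k j : (k < #|J|)%N -> j \in AG2_S pi k -> out k <= nu k j.
Proof.
move nk: (#|J| - k)%N => d; elim: d k nk => [|d IH] k nk kn jS; first lia.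
have [->|j_pi] := eqVneq j (pi k); first exact: lexx.
have jS1 : j \in AG2_S pi k.+1 by rewrite /= !inE j_pi.
have [k1n|] := ltnP k.+1 #|J|; last first.
  move=> nk1; have kn1 : k.+1 = #|J| by lia.
  by rewrite kn1 AG2_S_final inE in jS1.
rewrite -AG2_out_le_nuS //.
apply: le_trans (adm k1n) (IH _ _ k1n jS1); lia.
Qed.

End AG2Run.

Theorem proposition2 (R : realFieldType) (J : finType)
    (F : {set {set J}}) (w : {set J} -> J -> R) (c : J -> R) (pi : nat -> J) :
  set_system_ok F ->
  weights_pos F w ->
  AG2_run F w c pi ->
  admissible_run w c pi ->
  forall m, (m < #|J|)%N ->
    AG2_out w c pi m =
    AG2_nu w c pi m
      (Order.arg_min (pi m) (fun j => j \in AG2_S pi m) (AG2_nu w c pi m)).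
Proof.
move=> F_ok w_pos run adm m mn.
have pi_in_S := AG2_pi_in_S run mn.
case: arg_minP => // i iS i_min.
apply/eqP; rewrite eq_le (AG2_out_le_nu F_ok w_pos run adm mn iS).
exact: i_min.
Qed.
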